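(* For every formula $\varphi$ there exists a formula $\varphi'$ with $\varphi'\equiv\varphi$ such that $\varphi'$ is in first normal form (i.e. $\mathrm{ubw}(\varphi') = 0$), $|\varphi'| \leq 4^{2|\varphi|}\cdot|\varphi|$, for every subformula $\mathbf{GF}\psi$ of $\varphi'$ the formula $\psi$ is a subformula of $\varphi$, and every subformula of $\varphi'$ of the form $\mathbf{FG}\chi$ is also a subformula of $\varphi$.
   Context: Fix a finite set $Ap$ of atomic propositions. A word is an infinite sequence $w = w[0]w[1]\dots$ of letters of $2^{Ap}$, and $w_i$ denotes the suffix $w[i]w[i+1]\dots$. Formulas are generated by $\varphi ::= \mathbf{true} \mid \mathbf{false} \mid a \mid \neg a \mid \varphi\wedge\varphi \mid \varphi\vee\varphi \mid \mathbf{X}\varphi \mid \varphi\,\mathbf{U}\,\varphi \mid \varphi\,\mathbf{W}\,\varphi \mid \mathbf{GF}\varphi \mid \mathbf{FG}\varphi$ ($a\in Ap$), where $\mathbf{GF}$, $\mathbf{FG}$ are single unary operators (limit operators). Semantics: $w\models a$ iff $a\in w[0]$, $w\models\neg a$ iff $a\notin w[0]$, Boolean constants and connectives as usual; $w\models\mathbf{X}\varphi$ iff $w_1\models\varphi$; $w\models\varphi\mathbf{U}\psi$ iff $\exists k$: $w_k\models\psi$ and $\forall j<k$: $w_j\models\varphi$; $w\models\varphi\mathbf{W}\psi$ iff ($\forall k$: $w_k\models\varphi$) or $w\models\varphi\mathbf{U}\psi$; $w\models\mathbf{GF}\varphi$ iff $w_k\models\varphi$ for infinitely many $k$; $w\models\mathbf{FG}\varphi$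 iff $\exists n\,\forall k\geq n$: $w_k\models\varphi$. $\varphi\equiv\psi$ means both are satisfied by the same words. The syntax tree $T_\varphi$ has leaves $\mathbf{true},\mathbf{false},a,\neg a$ and one internal node per operator occurrence; $|\varphi|$ is its number of nodes. A $\mathbf{U}$-node (resp. $\mathbf{W}$-node, limit node) is a node whose subformula has top operator $\mathbf{U}$ (resp. $\mathbf{W}$, $\mathbf{GF}$ or $\mathbf{FG}$). A node is under another if it is a proper descendant of it. $\mathrm{ubw}(\varphi)$ is the number of $\mathbf{U}$-nodes of $T_\varphi$ that are under some $\mathbf{W}$-node but not under any limit node. A formula $\varphi$ is in first normal form if $\mathrm{ubw}(\varphi)=0$. *)

From mathcomp Require Import all_boot.
Set Implicit Arguments. Unset Strict Implicit. Unset Printing Implicit Defensive.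

Section LTL.
Variable Ap : finType.

Inductive formula : Type :=
| Ftrue | Ffalse
| Fatom of Ap
| Fnatom of Ap
| Fand of formula & formula
| For of formula & formula
| FX of formula
| FU of formula & formula
| FW of formula & formula
| FGF of formula
| FFG of formula.

Definition word := nat -> {set Ap}.
Definition suffix (w : word) (i : nat) : word := fun n => w (i + n).

Fixpoint sat (w : word) (f : formula) : Prop :=
  match f with
  | Ftrue => True
  | Ffalse => False
  | Fatom a => a \in w 0
  | Fnatom a => a \notin w 0
  | Fand f1 f2 => sat w f1 /\ sat w f2
  | For f1 f2 => sat w f1 \/ sat w f2
  | FX f1 => sat (suffix w 1) f1
  | FU f1 f2 => exists k, sat (suffix w k) f2 /\ forall j, j < k -> sat (suffix w j) f1
  | FW f1 f2 => (forall k, sat (suffix w k) f1) \/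
                (exists k, sat (suffix w k) f2 /\ forall j, j < k -> sat (suffix w j) f1)
  | FGF f1 => forall n, exists k, n <= k /\ sat (suffix w k) f1
  | FFG f1 => exists n, forall k, n <= k -> sat (suffix w k) f1
  end.

Definition fequiv (f g : formula) : Prop := forall w, sat w f <-> sat w g.

Fixpoint fsize (f : formula) : nat :=
  match f with
  | Ftrue | Ffalse | Fatom _ | Fnatom _ => 1
  | Fand f1 f2 | For f1 f2 | FU f1 f2 | FW f1 f2 => (fsize f1 + fsize f2).+1
  | FX f1 | FGF f1 | FFG f1 => (fsize f1).+1
  end.

Fixpoint subf (psi f : formula) : Prop :=
  psi = f \/
  match f with
  | Ftrue | Ffalse | Fatom _ | Fnatom _ => False
  | Fand f1 f2 | For f1 f2 | FU f1 f2 | FW f1 f2 => subf psi f1 \/ subf psi f2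
  | FX f1 | FGF f1 | FFG f1 => subf psi f1
  end.

(* ubw_aux b f: number of U-nodes of f that are under some W-node (counting
   b = true as "f itself is under a W-node") and not under any limit node
   (nodes strictly below a GF/FG node are never counted). *)
Fixpoint ubw_aux (b : bool) (f : formula) : nat :=
  match f with
  | Ftrue | Ffalse | Fatom _ | Fnatom _ => 0
  | Fand f1 f2 | For f1 f2 => ubw_aux b f1 + ubw_aux b f2
  | FX f1 => ubw_aux b f1
  | FU f1 f2 => b + ubw_aux b f1 + ubw_aux b f2
  | FW f1 f2 => ubw_aux true f1 + ubw_aux true f2
  | FGF _ | FFG _ => 0
  end.

Definition ubw (f : formula) : nat := ubw_aux false f.
Definition first_normal_form (f : formula) : Prop := ubw f = 0.

End LTL.

From HB Require Import structures.
From Pilot Require Import Defs.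
From mathcomp Require Import all_boot zify.
From Stdlib Require Import FunctionalExtensionality Classical.

Set Implicit Arguments. Unset Strict Implicit. Unset Printing Implicit Defensive.

(* Since a W b is equivalent to a U (b \/ G a), it suffices to find a formula
   D(a) in first normal form such that D(a) implies G a and G a implies
   F D(a).  Decompose a into finitely many pairs (g, c): the guard g is a
   conjunction of formulas GF v, hence holds on all suffixes once it holds,
   and the body c is a with every u U v replaced either by u W v, guarded by
   GF v, or by false (when GF v fails, u U v is eventually false forever).
   Under its guard, c implies a on every suffix, and on every word some guard
   holds while a implies c from some position on.  So the disjunction D(a)
   ([always_nf a]) of the formulas g /\ G c does the job.  There are at most
   2^|a| pairs, each of size below 8^|a|, whence the bound 16^|phi|. *)

Lemma forall_in_cons (T : eqType) (P : T -> Prop) x s :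
  {in x :: s, forall y, P y} -> P x /\ {in s, forall y, P y}.
Proof. by move=> Ps; split=> [|y ys]; apply: Ps; rewrite inE ?eqxx ?ys ?orbT. Qed.

Section FirstNormalForm.

Variable Ap : finType.
Local Notation formula := (formula Ap).
Local Notation word := (word Ap).
Local Notation suffix := Defs.suffix.
Local Notation tt_ := (Ftrue Ap).
Local Notation ff := (Ffalse Ap).
Implicit Types (f g h c d a b psi chi : formula) (w : word).

Lemma formula_eq_dec : comparable formula.
Proof. by rewrite /comparable /decidable; decide equality; apply: eq_comparable. Qed.

HB.instance Definition _ := hasDecEq.Build formula (compareP formula_eq_dec).

Lemma suffix_add w i j : suffix (suffix w i) j = suffix w (i + j).
Proof. by apply: functional_extensionality => n; rewrite /suffix addnA. Qed.

Lemma sat_X_at w k a : sat (suffix w k) (FX a) <-> sat (suffix w k.+1) a.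
Proof. by rewrite /= suffix_add addn1. Qed.

Lemma sat_U_at w k a b :
  sat (suffix w k) (FU a b) <->
  exists2 j, k <= j & sat (suffix w j) b /\ forall i, k <= i < j -> sat (suffix w i) a.
Proof.
split=> [[j [bj aj]] | [j le_kj [bj aj]]].
- exists (k + j); first exact: leq_addr.
  rewrite -suffix_add; split=> // i /andP[le_ki lt_ij].
  by rewrite -(subnKC le_ki) -suffix_add; apply: aj; rewrite ltn_subLR.
- exists (j - k); rewrite suffix_add subnKC //; split=> // i lt_i.
  by rewrite suffix_add; apply: aj; rewrite leq_addr /= -ltn_subRL.
Qed.

Lemma sat_W_at w k a b :
  sat (suffix w k) (FW a b) <->
  (forall i, k <= i -> sat (suffix w i) a) \/ sat (suffix w k) (FU a b).
Proof.
rewrite /=; split=> -[Ga | Uab]; [left | by right | left | by right].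
- by move=> i le_ki; rewrite -(subnKC le_ki) -suffix_add.
- by move=> i; rewrite suffix_add; apply: Ga; exact: leq_addr.
Qed.

Lemma sat_GF_at w k psi : sat w (FGF psi) -> sat (suffix w k) (FGF psi).
Proof.
move=> /= GFpsi n; have [m [le_m psim]] := GFpsi (k + n).
by exists (m - k); rewrite suffix_add subnKC; [split=> //; lia | lia].
Qed.

Lemma not_GF_eventually_never w psi :
  ~ sat w (FGF psi) -> exists n, forall k, n <= k -> ~ sat (suffix w k) psi.
Proof. by move=> /not_all_ex_not[n Hn]; exists n => k le_nk psik; apply: Hn; exists k. Qed.

Fixpoint decomp f : seq (formula * formula) :=
  match f with
  | Fand a b => [seq (Fand p.1 q.1, Fand p.2 q.2) | p <- decomp a, q <- decomp b]
  | For a b => [seq (Fand p.1 q.1, For p.2 q.2) | p <- decomp a, q <- decomp b]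
  | FX a => [seq (p.1, FX p.2) | p <- decomp a]
  | FU a b => [seq (Fand (FGF b) (Fand p.1 q.1), FW p.2 q.2) | p <- decomp a, q <- decomp b]
           ++ [seq (Fand p.1 q.1, ff) | p <- decomp a, q <- decomp b]
  | FW a b => [seq (Fand p.1 q.1, FW p.2 q.2) | p <- decomp a, q <- decomp b]
  | _ => [:: (tt_, f)]
  end.

Definition is_leaf f :=
  if f is (Fand _ _ | For _ _ | FX _ | FU _ _ | FW _ _) then false else true.

Lemma decomp_ind (P : formula -> formula -> formula -> Prop) :
    (forall f, is_leaf f -> P f tt_ f) ->
    (forall a b g h c d, P a g c -> P b h d -> P (Fand a b) (Fand g h) (Fand c d)) ->
    (forall a b g h c d, P a g c -> P b h d -> P (For a b) (Fand g h) (For c d)) ->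
    (forall a g c, P a g c -> P (FX a) g (FX c)) ->
    (forall a b g h c d, P a g c -> P b h d ->
       P (FU a b) (Fand (FGF b) (Fand g h)) (FW c d)) ->
    (forall a b g h c d, P a g c -> P b h d -> P (FU a b) (Fand g h) ff) ->
    (forall a b g h c d, P a g c -> P b h d -> P (FW a b) (Fand g h) (FW c d)) ->
  forall a g c, (g, c) \in decomp a -> P a g c.
Proof.
move=> Pleaf Pand Por PX PUGF PUF PW.
elim=> [||x|x|a IHa b IHb|a IHa b IHb|a IHa|a IHa b IHb|a IHa b IHb|a _|a _] /=;
  try by move=> g c; rewrite inE => /eqP[-> ->]; apply: Pleaf.
- by move=> _ _ /allpairsPdep[[g c] [[h d] [/IHa + /IHb + [-> ->]]]]; apply: Pand.
- by move=> _ _ /allpairsPdep[[g c] [[h d] [/IHa + /IHb + [-> ->]]]]; apply: Por.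
- by move=> _ _ /mapP[[g c] /IHa + [-> ->]]; apply: PX.
- move=> g0 c0; rewrite mem_cat.
  move=> /orP[] /allpairsPdep[[g c] [[h d] [/IHa Pa /IHb Pb [-> ->]]]].
  + exact: PUGF Pa Pb.
  + exact: PUF Pa Pb.
- by move=> _ _ /allpairsPdep[[g c] [[h d] [/IHa + /IHb + [-> ->]]]]; apply: PW.
Qed.

Lemma decomp_sound a g c : (g, c) \in decomp a ->
  forall w, sat w g -> forall k, sat (suffix w k) c -> sat (suffix w k) a.
Proof.
move: a g c; apply: decomp_ind => //.
- move=> a b g h c d IHa IHb w [gw hw] k [ck dk].
  by split; [apply: IHa gw k ck | apply: IHb hw k dk].
- move=> a b g h c d IHa IHb w [gw hw] k [ck | dk].
  + by left; apply: IHa gw k ck.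
  + by right; apply: IHb hw k dk.
- by move=> a g c IHa w gw k; rewrite !sat_X_at; apply: IHa.
- move=> a b g h c d IHa IHb w [GFb [gw hw]] k.
  rewrite sat_W_at !sat_U_at => -[Gc | [j le_kj [dj cj]]].
  + have [m [le_km bm]] := GFb k.
    exists m => //; split=> // i /andP[le_ki _].
    exact: IHa gw i (Gc i le_ki).
  + exists j => //; split; first exact: IHb hw j dj.
    by move=> i /cj; apply: IHa gw i.
- move=> a b g h c d IHa IHb w [gw hw] k.
  rewrite !sat_W_at !sat_U_at => -[Gc | [j le_kj [dj cj]]].
  + by left=> i /Gc; apply: IHa gw i.
  + right; exists j => //; split; first exact: IHb hw j dj.
    by move=> i /cj; apply: IHa gw i.
Qed.

Lemma decomp_complete a w :
  exists2 p, p \in decomp a & exists n, forall k, n <= k ->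
    sat (suffix w k) p.1 /\ (sat (suffix w k) a -> sat (suffix w k) p.2).
Proof.
elim: a w => [||x|x|a IHa b IHb|a IHa b IHb|a IHa|a IHa b IHb|a IHa b IHb|a _|a _] w;
  try by eexists; [exact: mem_head | exists 0].
- have [[g c] ga [n1 Ha]] := IHa w; have [[h d] hb [n2 Hb]] := IHb w.
  exists (Fand g h, Fand c d); first by apply/allpairsPdep; exists (g, c), (h, d).
  exists (maxn n1 n2) => k; rewrite geq_max => /andP[/Ha[gk ac] /Hb[hk bd]].
  by split=> // -[/ac ck /bd dk].
- have [[g c] ga [n1 Ha]] := IHa w; have [[h d] hb [n2 Hb]] := IHb w.
  exists (Fand g h, For c d); first by apply/allpairsPdep; exists (g, c), (h, d).
  exists (maxn n1 n2) => k; rewrite geq_max => /andP[/Ha[gk ac] /Hb[hk bd]].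
  by split=> // -[/ac ck | /bd dk]; [left | right].
- have [[g c] ga [n Ha]] := IHa w.
  exists (g, FX c); first by apply/mapP; exists (g, c).
  exists n => k le_nk; split; first exact: (Ha k le_nk).1.
  by rewrite !sat_X_at; apply: (Ha k.+1 (leqW le_nk)).2.
- have [[g c] ga [n1 Ha]] := IHa w; have [[h d] hb [n2 Hb]] := IHb w.
  have [GFb | /not_GF_eventually_never[n0 nb]] := classic (sat w (FGF b)).
  + exists (Fand (FGF b) (Fand g h), FW c d).
      by rewrite mem_cat; apply/orP; left; apply/allpairsPdep; exists (g, c), (h, d).
    exists (maxn n1 n2) => k; rewrite geq_max => /andP[le1 le2].
    split; first by do !split; [exact: sat_GF_at | exact: (Ha k le1).1 | exact: (Hb k le2).1].
    rewrite sat_W_at !sat_U_at => -[j le_kj [bj aj]]; right; exists j => //; split.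
    * by apply: (Hb j _).2 => //; apply: leq_trans le_kj.
    * move=> i /andP[le_ki lt_ij].
      by apply: (Ha i _).2 (aj i _); [apply: leq_trans le_ki | apply/andP].
  + exists (Fand g h, ff).
      by rewrite mem_cat; apply/orP; right; apply/allpairsPdep; exists (g, c), (h, d).
    exists (maxn n0 (maxn n1 n2)) => k; rewrite !geq_max => /and3P[le0 le1 le2].
    split; first by split; [exact: (Ha k le1).1 | exact: (Hb k le2).1].
    by rewrite sat_U_at => -[j le_kj [bj _]]; apply: (nb j) => //; apply: leq_trans le_kj.
- have [[g c] ga [n1 Ha]] := IHa w; have [[h d] hb [n2 Hb]] := IHb w.
  exists (Fand g h, FW c d); first by apply/allpairsPdep; exists (g, c), (h, d).
  exists (maxn n1 n2) => k; rewrite geq_max => /andP[le1 le2].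
  split; first by split; [exact: (Ha k le1).1 | exact: (Hb k le2).1].
  rewrite !sat_W_at !sat_U_at => -[Ga | [j le_kj [bj aj]]].
  + by left=> i le_ki; apply: (Ha i _).2 (Ga i le_ki); apply: leq_trans le_ki.
  + right; exists j => //; split.
    * by apply: (Hb j _).2 => //; apply: leq_trans le_kj.
    * move=> i /andP[le_ki lt_ij].
      by apply: (Ha i _).2 (aj i _); [apply: leq_trans le_ki | apply/andP].
Qed.

Definition always f := FW f ff.

Definition guarded_always (l : seq (formula * formula)) : formula :=
  foldr (fun p rest => For (Fand p.1 (always p.2)) rest) ff l.

Definition always_nf a := guarded_always (decomp a).

Lemma sat_guarded_always w l :
  sat w (guarded_always l) <->
  exists2 p, p \in l & sat w p.1 /\ forall k, sat (suffix w k) p.2.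
Proof.
elim: l => [|q l IHl] /=; first by split=> [[] | [p]].
rewrite IHl; split=> [[[qw [Gq | [k [[]]]]] | [p pl pw]] | [p]].
- by exists q; rewrite ?mem_head.
- by exists p; rewrite // in_cons pl orbT.
- by rewrite in_cons => /orP[/eqP-> [qw Gq] | pl pw]; [left; split; [|left] | right; exists p].
Qed.

Lemma always_nf_always w a :
  sat w (always_nf a) -> forall k, sat (suffix w k) a.
Proof.
by move=> /sat_guarded_always[[g c] /decomp_sound sound [gw Gc]] k; apply: sound gw k (Gc k).
Qed.

Lemma always_eventually_always_nf w a :
  (forall k, sat (suffix w k) a) -> exists n, sat (suffix w n) (always_nf a).
Proof.
move=> Ga; have [[g c] ga [n Hn]] := decomp_complete a w.
exists n; apply/sat_guarded_always; exists (g, c) => //.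
split=> [|k]; first exact: (Hn n (leqnn n)).1.
by rewrite suffix_add; apply: (Hn _ (leq_addr k n)).2.
Qed.

Lemma W_as_U a b : fequiv (FU a (For b (always_nf a))) (FW a b).
Proof.
move=> w; rewrite -[w]/(suffix w 0) sat_W_at !sat_U_at; split.
- move=> [k _ [[bk | /always_nf_always Ga] ak]]; first by right; exists k.
  left=> i _; have [lt_ik | le_ki] := ltnP i k; first exact: ak.
  by rewrite -(subnKC le_ki) -suffix_add; apply: Ga.
- move=> [Ga | [k _ [bk ak]]]; last by exists k => //; split; first left.
  have [n Dn] := always_eventually_always_nf (fun k => Ga k (leq0n k)).
  by exists n => //; split=> [|i _]; [right | apply: Ga].
Qed.

Fixpoint fnf f : formula :=
  match f with
  | Fand a b => Fand (fnf a) (fnf b)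
  | For a b => For (fnf a) (fnf b)
  | FX a => FX (fnf a)
  | FU a b => FU (fnf a) (fnf b)
  | FW a b => FU (fnf a) (For (fnf b) (always_nf a))
  | _ => f
  end.

Lemma fequiv_and a a' b b' : fequiv a a' -> fequiv b b' -> fequiv (Fand a b) (Fand a' b').
Proof. by move=> ea eb w /=; rewrite ea eb. Qed.

Lemma fequiv_or a a' b b' : fequiv a a' -> fequiv b b' -> fequiv (For a b) (For a' b').
Proof. by move=> ea eb w /=; rewrite ea eb. Qed.

Lemma fequiv_X a a' : fequiv a a' -> fequiv (FX a) (FX a').
Proof. by move=> ea w /=; rewrite ea. Qed.

Lemma fequiv_U a a' b b' : fequiv a a' -> fequiv b b' -> fequiv (FU a b) (FU a' b').
Proof. by move=> ea eb w; split=> -[k [/eb bk ak]]; exists k; split=> // j /ak/ea. Qed.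

Lemma fnf_equiv f : fequiv (fnf f) f.
Proof.
elim: f => //= [a IHa b IHb|a IHa b IHb|a IHa|a IHa b IHb|a IHa b IHb].
- exact: fequiv_and.
- exact: fequiv_or.
- exact: fequiv_X.
- exact: fequiv_U.
- move=> w; rewrite -W_as_U.
  exact: fequiv_U IHa (fequiv_or IHb (fun=> iff_refl _)) w.
Qed.

Lemma ubw_decomp a g c : (g, c) \in decomp a -> ubw_aux false g = 0 /\ ubw_aux true c = 0.
Proof. by move: a g c; apply: decomp_ind => /= [[]|*|*|*|*|*|*] //; lia. Qed.

Lemma ubw_guarded_always (l : seq (formula * formula)) :
  {in l, forall p, ubw_aux false p.1 = 0 /\ ubw_aux true p.2 = 0} ->
  ubw_aux false (guarded_always l) = 0.
Proof. by elim: l => [|q l IHl] //= /forall_in_cons[[-> ->] /IHl->]. Qed.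

Lemma ubw_fnf f : ubw (fnf f) = 0.
Proof.
rewrite /ubw; elim: f => //= [|||a -> b ->] *; try lia.
by rewrite ubw_guarded_always // => -[g c]; apply: ubw_decomp.
Qed.

Lemma subf_refl f : subf f f.
Proof. by case: f => *; left. Qed.

Fixpoint limits_in (S : formula -> Prop) f : Prop :=
  match f with
  | Fand a b | For a b | FU a b | FW a b => limits_in S a /\ limits_in S b
  | FX a => limits_in S a
  | FGF psi => S psi /\ limits_in S psi
  | FFG chi => S f /\ limits_in S chi
  | _ => True
  end.

Lemma limits_in_subf (S : formula -> Prop) f :
  (forall x, subf x f -> S x) -> limits_in S f.
Proof.
elim: f => //= [a IHa b IHb|a IHa b IHb|a IHa|a IHa b IHb|a IHa b IHb|psi IH|chi IH] Sf.
all: try by split; [apply: IHa | apply: IHb] => x xf; apply: Sf; right; [left | right].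
- by apply: IHa => x xa; apply: Sf; right.
- split; first by apply: Sf; right; exact: subf_refl.
  by apply: IH => x x_psi; apply: Sf; right.
- by split; [apply: Sf; left | apply: IH => x x_chi; apply: Sf; right].
Qed.

Lemma limits_inP (S : formula -> Prop) f : limits_in S f ->
  (forall psi, subf (FGF psi) f -> S psi) /\ (forall chi, subf (FFG chi) f -> S (FFG chi)).
Proof.
elim: f => /= [||x|x|a IHa b IHb|a IHa b IHb|a IHa|a IHa b IHb|a IHa b IHb|psi IH|chi IH].
all: try by split=> ? [].
all: try by move=> [{}/IHa[GFa FGa] {}/IHb[GFb FGb]];
  split=> ? [// | [] ?]; by [apply: GFa | apply: GFb | apply: FGa | apply: FGb].
- by move=> {}/IHa[GFa FGa]; split=> ? [// | ?]; [apply: GFa | apply: FGa].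
- by move=> [S_psi {}/IH[GF FG]]; split=> [psi' [[->] // | /GF] | chi' [// | /FG]].
- by move=> [S_chi {}/IH[GF FG]]; split=> [psi' [// | /GF] | chi' [[->] // | /FG]].
Qed.

Lemma decomp_limits a g c : (g, c) \in decomp a ->
  forall S, (forall x, subf x a -> S x) -> limits_in S g /\ limits_in S c.
Proof.
move: a g c; apply: decomp_ind => /= [f _ S Sf | | | a g c IHa S Sa | | |].
1: by split=> //; apply: limits_in_subf.
3: by apply: IHa => x xa; apply: Sa; right.
all: move=> a b g h c d IHa IHb S Sab.
all: have Sb x : subf x b -> S x by move=> xb; apply: Sab; right; right.
all: have [lg lc] := IHa S (fun x xa => Sab x (or_intror (or_introl xa))).
all: have [lh ld] := IHb S Sb.
all: do !split=> //.
- by apply: Sb; exact: subf_refl.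
- exact: limits_in_subf.
Qed.

Lemma limits_in_guarded_always (S : formula -> Prop) (l : seq (formula * formula)) :
  {in l, forall p, limits_in S p.1 /\ limits_in S p.2} -> limits_in S (guarded_always l).
Proof. by elim: l => [|q l IHl] //= /forall_in_cons[[lq1 lq2] /IHl]. Qed.

Lemma fnf_limits (S : formula -> Prop) f :
  (forall x, subf x f -> S x) -> limits_in S (fnf f).
Proof.
elim: f => [||x|x|a IHa b IHb|a IHa b IHb|a IHa|a IHa b IHb|a IHa b IHb|psi _|chi _] Sf;
  try exact: limits_in_subf.
3: by apply: IHa => x xa; apply: Sf; right.
all: have Sa x : subf x a -> S x by move=> xa; apply: Sf; right; left.
all: have Sb x : subf x b -> S x by move=> xb; apply: Sf; right; right.
all: split; [exact: IHa | try exact: IHb].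
split; first exact: IHb.
by apply: limits_in_guarded_always => -[g c] /decomp_limits; apply.
Qed.

Lemma fsize_gt0 f : 0 < fsize f.
Proof. by case: f. Qed.

Lemma size_decomp a : size (decomp a) <= 2 ^ fsize a.
Proof.
elim: a => /= [||x|x|a IHa b IHb|a IHa b IHb|a IHa|a IHa b IHb|a IHa b IHb|a _|a _];
  rewrite ?size_cat ?size_map ?size_allpairs ?expnS ?expnD ?expn_gt0 //; nia.
Qed.

Lemma fsize_decomp a g c : (g, c) \in decomp a -> fsize g + fsize c + 4 < 8 ^ fsize a.
Proof.
move: a g c; apply: decomp_ind => /= [f _ | | | a g c IHa | | |].
1: by case: (fsize f) (fsize_gt0 f) => // n _; elim: n => // n IHn; rewrite expnS; lia.
3: by rewrite expnS; lia.
all: move=> a b g h c d IHa IHb; have := ltn_expl (fsize b) (isT : 1 < 8).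
all: rewrite expnS expnD; nia.
Qed.

Lemma fsize_guarded_always (l : seq (formula * formula)) B :
  {in l, forall p, fsize p.1 + fsize p.2 + 4 <= B} ->
  fsize (guarded_always l) <= size l * B + 1.
Proof. by elim: l => [|q l IHl] //= /forall_in_cons[Bq /IHl]; rewrite mulSn; lia. Qed.

Lemma fsize_always_nf a : fsize (always_nf a) <= 16 ^ fsize a.
Proof.
have entry_le : {in decomp a, forall p, fsize p.1 + fsize p.2 + 4 <= (8 ^ fsize a).-1}.
  by move=> [g c] /fsize_decomp lt_gc; rewrite -ltnS prednK // expn_gt0.
have := fsize_guarded_always entry_le; have := size_decomp a.
have := expn_gt0 8 (fsize a); have := ltn_expl (fsize a) (isT : 1 < 2).
rewrite /always_nf (_ : 16 = 2 * 8) // expnMn; nia.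
Qed.

Lemma fsize_fnf f : fsize (fnf f) < 16 ^ fsize f.
Proof.
elim: f => /= [||x|x|a IHa b IHb|a IHa b IHb|a IHa|a IHa b IHb|a IHa b IHb|a _|a _].
all: try by rewrite ltn_expl.
all: try have := fsize_always_nf a.
all: rewrite expnS ?expnD; nia.
Qed.

End FirstNormalForm.

Theorem proposition1 (Ap : finType) (phi : formula Ap) :
  exists phi' : formula Ap,
    [/\ fequiv phi' phi,
        first_normal_form phi',
        fsize phi' <= 4 ^ (2 * fsize phi) * fsize phi,
        (forall psi, subf (FGF psi) phi' -> subf psi phi)
      & (forall chi, subf (FFG chi) phi' -> subf (FFG chi) phi)].
Proof.
have [GF_sub FG_sub] := limits_inP (@fnf_limits _ (fun x => subf x phi) phi (fun x => id)).
exists (fnf phi); split=> //.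
- exact: fnf_equiv.
- exact: ubw_fnf.
- rewrite expnM; apply: leq_trans (ltnW (fsize_fnf phi)) _.
  by rewrite leq_pmulr // fsize_gt0.
Qed.
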